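(* Let $\kappa$ be a regular infinite cardinal and $B$ a Boolean algebra with the $\kappa$-FN. Let $\lambda$ be a cardinal with $\lambda=\lambda^{<\kappa}$ and let $X\subseteq B$ with $|X|>\lambda$. Then there is an independent set $Y\subseteq X$ with $|Y|>\lambda$.
   Context: For an infinite cardinal $\kappa$, a Boolean algebra $B$ (with its canonical partial order) has the $\kappa$-Freese–Nation property ($\kappa$-FN) if there is a map $f:B\to[B]^{<\kappa}$ such that for all $a,b\in B$ with $a\le b$ there is $c\in f(a)\cap f(b)$ with $a\le c\le b$. A subset $Y$ of a Boolean algebra is independent if every elementary product $y_0^{\epsilon_0}\cdots y_{n-1}^{\epsilon_{n-1}}$ of finitely many distinct $y_i\in Y$ (where $y^1=y$, $y^0=-y$) is nonzero. *)

(* Boolean algebras = ctbDistrLatticeType (order.v). *)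
From mathcomp Require Import all_boot all_order.
Set Implicit Arguments. Unset Strict Implicit. Unset Printing Implicit Defensive.
Import Order.Theory.
Local Open Scope order_scope.

(* Cardinal comparison of types (cardinalities represented by types). *)
Definition card_le (A B : Type) : Prop := exists f : A -> B, injective f.
Definition card_lt (A B : Type) : Prop := card_le A B /\ ~ card_le B A.

Definition infinite_card (K : Type) : Prop := card_le nat K.

Definition regular_card (K : Type) : Prop :=
  infinite_card K /\
  forall (I : Type) (A : I -> K -> Prop),
    card_lt I K -> (forall i, card_lt {x : K | A i x} K) ->
    exists k : K, forall i, ~ A i k.

(* |L| = |L|^{<|K|}, i.e. |L|^mu <= |L| for every cardinal mu < |K|. *)
Definition pow_lt_eq (L K : Type) : Prop :=
  forall M : Type, card_lt M K -> card_le (M -> L) L.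

Definition kappa_FN (K : Type) d (B : ctbDistrLatticeType d) : Prop :=
  exists f : B -> (B -> Prop),
    (forall a, card_lt {x : B | f a x} K) /\
    (forall a b : B, a <= b -> exists c : B, f a c /\ f b c /\ a <= c /\ c <= b).

Definition independent d (B : ctbDistrLatticeType d) (Y : B -> Prop) : Prop :=
  forall (n : nat) (y : 'I_n -> B) (eps : 'I_n -> bool),
    injective y -> (forall i, Y (y i)) ->
    \meet_(i < n) (if eps i then y i else ~` y i) != \bot.

From mathcomp Require Import all_boot all_order.
From mathcomp Require Import boolp wochoice classical_sets.
Set Implicit Arguments. Unset Strict Implicit. Unset Printing Implicit Defensive.
Import Order.Theory.
Local Open Scope order_scope.

(* Let kappa = |K| and lambda = |L|, and suppose every independent subset of X has
   at most lambda elements.  Close {bot} under the Boolean operations, under the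
   kappa-FN map f, and under an operator assigning to two sets C, D of size < kappa a
   maximal subset of X independent modulo the ideal generated by C and D.  Since
   kappa is regular and lambda^{<kappa} = lambda, kappa stages of this closure give a
   subalgebra A of size at most lambda.  If some x in X were outside A, take for C
   the elements of f(x) /\ A below x, for D those of f(-x) /\ A below -x, and let Z
   be the maximal set chosen for C, D.  By the FN property C is cofinal in the part
   of A below x and D in the part below -x; this makes Z + {x} still independent
   modulo C and D, contradicting the maximality of Z.  Hence X is contained in A. *)

Lemma sval_inj (T : Type) (P : T -> Prop) : injective (@proj1_sig T P).
Proof. by move=> [x px] [y py] /= xy; subst y; rewrite (Prop_irrelevance px py). Qed.

Lemma card_le_refl (A : Type) : card_le A A.
Proof. by exists id. Qed.

Lemma card_le_trans (A B C : Type) : card_le A B -> card_le B C -> card_le A C.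
Proof. by move=> [g g_inj] [h h_inj]; exists (h \o g) => x y /h_inj /g_inj. Qed.

Lemma card_le_subset (T : Type) (P Q : T -> Prop) :
  (forall x, P x -> Q x) -> card_le {x | P x} {x | Q x}.
Proof.
move=> PQ; exists (fun x => exist Q (sval x) (PQ _ (svalP x))).
by move=> x y xy; apply: sval_inj; apply: (congr1 sval xy).
Qed.

Lemma card_le_sub (T : Type) (P : T -> Prop) : card_le {x | P x} T.
Proof. by exists sval; apply: sval_inj. Qed.

Lemma card_le_lt_trans (A B K : Type) : card_le A B -> card_lt B K -> card_lt A K.
Proof.
move=> AB [BK nKB]; split; first exact: card_le_trans BK.
by move=> KA; apply: nKB; apply: card_le_trans AB.
Qed.

Lemma card_le_arrow (M A B : Type) : card_le A B -> card_le (M -> A) (M -> B).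
Proof.
move=> [g g_inj]; exists (fun h => g \o h) => h1 h2 gh12.
by apply: funext => m; apply: g_inj; apply: (congr1 (fun h => h m) gh12).
Qed.

Lemma card_le_rel (A B : Type) (R : A -> B -> Prop) :
  (forall a, exists b, R a b) -> (forall a a' b, R a b -> R a' b -> a = a') ->
  card_le A B.
Proof.
move=> R_total R_inj; exists (fun a => sval (cid (R_total a))) => a a'.
by case: cid => b Rab; case: cid => b' Ra'b' /= bb'; subst b'; apply: R_inj Rab Ra'b'.
Qed.

Lemma card_le_cover (W T : Type) (P : T -> Prop) (g : W -> T) :
  (forall t, P t -> exists w, g w = t) -> card_le {t | P t} W.
Proof.
move=> cover; apply: (card_le_rel (R := fun t w => g w = sval t)) => [[t Pt]|t t' w gt gt'].
  exact: cover.
by apply: sval_inj; rewrite -gt -gt'.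
Qed.

Lemma card_le_image (L W T : Type) (g : W -> T) (P : T -> Prop) :
  card_le W L -> (forall t, P t -> exists w, g w = t) -> card_le {t | P t} L.
Proof. by move=> WL cover; apply: card_le_trans (card_le_cover cover) WL. Qed.

Lemma card_le_empty (T U : Type) (P : T -> Prop) : (forall x, ~ P x) -> card_le {x | P x} U.
Proof.
move=> P0; exists (fun x => False_rect U (P0 _ (svalP x))) => x.
by case: (P0 _ (svalP x)).
Qed.

Lemma no_card_le_pred (L : Type) : ~ card_le (L -> bool) L.
Proof.
move=> [g g_inj].
pose D l := ~~ `[< exists h, g h = l /\ h l >].
have witness : `[< exists h, g h = g D /\ h (g D) >] = D (g D).
  by apply/asboolP/idP => [[h [/g_inj ->]] //|DgD]; exists D.
have : D (g D) = ~~ D (g D) by rewrite {1}/D witness.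
by case: (D (g D)).
Qed.

Lemma card_le_total (A B : Type) : card_le A B \/ card_le B A.
Proof.
pose pbij (G : set (A * B)) :=
  (forall a b b', G (a, b) -> G (a, b') -> b = b') /\
  (forall a a' b, G (a, b) -> G (a', b) -> a = a').
have chain_pbij F : (F `<=` pbij)%classic -> total_on F subset ->
    pbij (\bigcup_(G in F) G)%classic.
  move=> F_pbij F_total.
  have common X Y : F X -> F Y -> exists2 G, F G & (X `<=` G /\ Y `<=` G)%classic.
    by move=> FX FY; case: (F_total X Y FX FY) => [XY|YX]; [exists Y|exists X] => //; split=> // ?.
  split=> [a b b'|a a' b] [X FX Xp] [Y FY Yp]; have [G FG [XG YG]] := common X Y FX FY.
    exact: (F_pbij G FG).1 _ _ _ (XG _ Xp) (YG _ Yp).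
  exact: (F_pbij G FG).2 _ _ _ (XG _ Xp) (YG _ Yp).
have [G [[G_fun G_inj] G_max]] := Zorn_bigcup chain_pbij.
have [G_dom|/existsNP[a0 /forallNP a0_free]] := pselect (forall a, exists b, G (a, b)).
  by left; apply: card_le_rel G_dom G_inj.
have [G_rng|/existsNP[b0 /forallNP b0_free]] := pselect (forall b, exists a, G (a, b)).
  by right; apply: card_le_rel G_rng (fun b b' a Gab Gab' => G_fun a b b' Gab Gab').
exfalso; apply: (G_max (fun p => G p \/ p = (a0, b0))).
  by split=> [p Gp|sub]; [left|apply: (a0_free b0); apply: sub; right].
split.
- move=> a b b' [Gab|[-> ->]] [Gab'|/pair_equal_spec[a_eq ->]] //.
  + exact: G_fun Gab Gab'.
  + by exfalso; apply: (a0_free b); rewrite -a_eq.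
  + by exfalso; apply: (a0_free b').
- move=> a a' b [Gab|[-> ->]] [Ga'b|/pair_equal_spec[-> b_eq]] //.
  + exact: G_inj Gab Ga'b.
  + by exfalso; apply: (b0_free a); rewrite -b_eq.
  + by exfalso; apply: (b0_free a').
Qed.

Lemma card_le_of_not_lt (A B : Type) : ~ card_lt A B -> card_le B A.
Proof.
move=> nAB; apply: contrapT => nBA; apply: nAB; split=> //.
by case: (card_le_total A B) => // /nBA.
Qed.

Lemma infinite_card_le_bool (L : Type) : infinite_card L -> card_le bool L.
Proof. by move=> [e e_inj]; exists (fun b : bool => e b) => [[] []] // /e_inj. Qed.

Lemma infinite_card_gt_bool (K : Type) : infinite_card K -> card_lt bool K.
Proof.
move=> infK; split; first exact: infinite_card_le_bool.
move=> KB; have [g g_inj] := card_le_trans infK KB.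
have : g 0 = g 1 \/ g 0 = g 2 \/ g 1 = g 2.
  by case: (g 0); case: (g 1); case: (g 2); auto.
by case=> [/g_inj|[/g_inj|/g_inj]].
Qed.

Lemma infinite_seq_from (K : Type) (k0 : K) : infinite_card K ->
  exists e : nat -> K, injective e /\ e 0 = k0.
Proof.
move=> [e e_inj]; have [[m ->]|k0_new] := pselect (exists m, k0 = e m).
  by exists (fun n => e (n + m)); split=> // n n' /e_inj /addIn.
exists (fun n => if n is n'.+1 then e n' else k0); split=> // [[|n] [|n']] //.
- by move=> k0E; case: k0_new; exists n'.
- by move=> k0E; case: k0_new; exists n.
- by move/e_inj ->.
Qed.

(* Hilbert's hotel: shift the sequence [e] one step to free the point [e 0 = k0]. *)
Lemma infinite_avoid_point (K : Type) (k0 : K) : infinite_card K ->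
  exists psi : K -> K, injective psi /\ forall k, psi k <> k0.
Proof.
move=> /(infinite_seq_from k0) [e [e_inj e0]].
pose psi k := if pselect (exists n, e n = k) is left ex then e (sval (cid ex)).+1 else k.
exists psi; split.
  move=> k k'; rewrite /psi.
  case: pselect => [ex|nex]; case: pselect => [ex'|nex'] //.
  - by case: cid => n En; case: cid => n' En' /= /e_inj [nn']; rewrite -En -En' nn'.
  - by case: cid => n _ /= E; case: nex'; exists n.+1.
  - by case: cid => n' _ /= E; case: nex; exists n'.+1.
move=> k; rewrite /psi; case: pselect => [ex|nex].
  by case: cid => n _ /=; rewrite -e0 => /e_inj.
by move=> E; apply: nex; exists 0; rewrite E.
Qed.

Lemma card_le_option_r (S K : Type) : infinite_card K ->
  card_le K (option S) -> card_le K S.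
Proof.
move=> infK [h h_inj].
have [k_none h_some] : exists k_none, forall k, k <> k_none -> h k <> None.
  have [[k_none hk]|] := pselect (exists k, h k = None).
    by exists k_none => k kk hkN; apply: kk; apply: h_inj; rewrite hkN.
  by move=> nN; have [e _] := infK; exists (e 0) => k _ hk; apply: nN; exists k.
have [psi [psi_inj psi_new]] := infinite_avoid_point k_none infK.
have h_psi k : h (psi k) <> None by apply: h_some.
case: (h (psi k_none)) (h_psi k_none) => [s0 _|//].
have hE k : Some (odflt s0 (h (psi k))) = h (psi k) by case: (h (psi k)) (h_psi k).
by exists (fun k => odflt s0 (h (psi k))) => k k' E; apply/psi_inj/h_inj; rewrite -hE E hE.
Qed.

Lemma card_lt_option (S K : Type) : infinite_card K ->
  card_lt S K -> card_lt (option S) K.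
Proof.
move=> infK [[g g_inj] nKS]; split; last by move/(card_le_option_r infK).
have [k0 k0_new] : exists k0, forall s, g s <> k0.
  apply: contrapT => /forallNP g_onto; apply: nKS.
  apply: (card_le_rel (R := fun k s => g s = k)) => [k|k k' s <- //].
  by apply: contrapT => /forallNP; apply: g_onto.
exists (fun o => if o is Some s then g s else k0) => [[s|] [s'|]] //=.
- by move/g_inj ->.
- by move/k0_new.
- by move/esym/k0_new.
Qed.

Section WellOrder.
Variable K : Type.

Definition worder : rel K := sval (well_ordering_principle {classic K}).

Let worder_chain : @wo_chain {classic K} worder predT.
Proof. exact: withinW (svalP (well_ordering_principle {classic K})). Qed.

Lemma worder_total : total worder.
Proof. by move=> a b; apply: (wo_chainW worder_chain). Qed.

Lemma worder_refl : reflexive worder.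
Proof. by move=> a; apply: (wo_chain_reflexive worder_chain). Qed.

Lemma worder_anti : antisymmetric worder.
Proof. by move=> a b; apply: (wo_chain_antisymmetric worder_chain). Qed.

Lemma worder_min (P : K -> Prop) : (exists x, P x) ->
  exists z, P z /\ forall x, P x -> worder z x.
Proof.
move=> [x Px].
have [|z [[Pz z_min] _]] :=  svalP (well_ordering_principle {classic K}) [pred x | `[< P x >]].
  by exists x; rewrite inE.
by move: Pz; rewrite inE => Pz; exists z; split=> // y Py; apply: z_min; rewrite inE.
Qed.

Lemma worder_trans : transitive worder.
Proof.
move=> b a c ab bc.
have [z [z_abc z_min]] :=
  @worder_min (fun x => x = a \/ x = b \/ x = c) (ex_intro _ a (or_introl erefl)).
case: z_abc => [|[|]] ->{z} in z_min *.
- by apply: z_min; right; right.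
- have ba : worder b a by apply: z_min; left.
  by rewrite (@worder_anti a b) ?ab.
- have cb : worder c b by apply: z_min; right; left.
  by rewrite -(@worder_anti b c) ?bc.
Qed.

Definition wlt (a b : K) := worder a b /\ a <> b.

Lemma wlt_le_trans (a b c : K) : wlt a b -> worder b c -> wlt a c.
Proof.
move=> [ab a_neq_b] bc; split; first exact: worder_trans bc.
by move=> ac; apply: a_neq_b; apply: worder_anti; rewrite ab ac bc.
Qed.

Lemma wlt_trans (a b c : K) : wlt a b -> wlt b c -> wlt a c.
Proof. by move=> ab [bc _]; apply: wlt_le_trans bc. Qed.

Lemma worder_of_not_wlt (a b : K) : ~ wlt a b -> worder b a.
Proof.
move=> nab; have [ba|ab] := orP (worder_total b a) => //.
by have [<-|a_neq_b] := pselect (a = b); [apply: worder_refl|case: nab].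
Qed.

Lemma card_le_worder_seg (k : K) : card_le {j | worder j k} (option {j | wlt j k}).
Proof.
exists (fun j => if pselect (sval j = k) is right ne
                 then Some (exist _ (sval j) (conj (svalP j) ne)) else None).
move=> j j'; case: pselect => [jk|njk]; case: pselect => [j'k|nj'k] //.
- by move=> _; apply: sval_inj; rewrite jk j'k.
- by case=> /sval_inj.
Qed.

Lemma wlt_ind (P : K -> Prop) :
  (forall k, (forall j, wlt j k -> P j) -> P k) -> forall k, P k.
Proof.
move=> IH k; apply: contrapT => nPk.
have [z [nPz z_min]] := @worder_min (fun k => ~ P k) (ex_intro _ k nPk).
apply: nPz; apply: IH => j [jz j_neq_z]; apply: contrapT => nPj.
by apply: j_neq_z; apply: worder_anti; rewrite jz z_min.
Qed.
End WellOrder.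

Section Kappa.
Variable K : Type.
Hypothesis regK : regular_card K.

(* The points below the first point with |K| predecessors: an initial segment of
   order type kappa. *)
Definition in_kappa (k : K) := forall k', card_le K {j | wlt j k'} -> wlt k k'.

Lemma in_kappa_seg (k : K) : in_kappa k -> card_lt {j | wlt j k} K.
Proof.
move=> kk; split; first exact: card_le_sub.
by move=> /kk [_]; apply.
Qed.

Lemma in_kappa_wlt (j k : K) : in_kappa k -> wlt j k -> in_kappa j.
Proof. by move=> kk jk k' /kk; apply: wlt_trans. Qed.

Lemma card_le_in_kappa : card_le K {k | in_kappa k}.
Proof.
have [long|no_long] := pselect (exists k : K, card_le K {j | wlt j k}).
  have [k0 [Kk0 k0_min]] := @worder_min K _ long.
  apply: card_le_trans Kk0 (card_le_subset (Q := in_kappa) _) => j jk0 k' /k0_min.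
  exact: wlt_le_trans.
exists (fun k => exist in_kappa k (fun k' Kk' => False_ind _ (no_long (ex_intro _ k' Kk')))).
by move=> k k' /(congr1 sval).
Qed.

Lemma in_kappa_bound (T : Type) (g : T -> K) :
  card_lt T K -> (forall t, in_kappa (g t)) -> exists m, in_kappa m /\ forall t, wlt (g t) m.
Proof.
move=> TK g_kappa; have [h h_inj] := card_le_in_kappa.
have below_small t : card_lt {k | worder (sval (h k)) (g t)} K.
  apply: card_le_lt_trans (card_lt_option regK.1 (in_kappa_seg (g_kappa t))).
  apply: card_le_trans (card_le_worder_seg (g t)).
  exists (fun k : {k | worder (sval (h k)) (g t)} => exist _ (sval (h (sval k))) (svalP k)).
  by move=> k k' E; apply/sval_inj/h_inj/sval_inj; apply: (congr1 sval E).
have [k k_above] := regK.2 T _ TK below_small.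
exists (sval (h k)); split; first exact: svalP.
by move=> t; apply: contrapT => nlt; apply: (k_above t); apply: worder_of_not_wlt.
Qed.

Lemma in_kappa_above2 (j1 j2 : K) : in_kappa j1 -> in_kappa j2 ->
  exists m, [/\ in_kappa m, wlt j1 m & wlt j2 m].
Proof.
move=> j1k j2k.
have [|m [mk m_above]] :=
  @in_kappa_bound _ (fun b => if b then j1 else j2) (infinite_card_gt_bool regK.1).
  by case.
by exists m; split=> //; [apply: (m_above true)|apply: (m_above false)].
Qed.
End Kappa.

Section IndependenceModulo.
Variables (d : Order.disp_t) (B : ctbDistrLatticeType d).
Implicit Types (a b x y : B) (C D Z Q : B -> Prop).

Definition literal (p : B * bool) : B := if p.2 then p.1 else ~` p.1.

Definition elem_prod (s : seq (B * bool)) : B := \meet_(p <- s) literal p.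

Definition indep_modulo C D Z : Prop :=
  forall (s : seq (B * bool)) (cs es : seq B),
  uniq (map fst s) -> (forall p, p \in s -> Z p.1) ->
  (forall c, c \in cs -> C c) -> (forall e, e \in es -> D e) ->
  ~ elem_prod s <= \join_(c <- cs) c `|` \join_(e <- es) e.

Lemma indep_modulo_independent C D Z : indep_modulo C D Z -> independent Z.
Proof.
move=> indZ n y eps y_inj Zy; apply/negP => /eqP prod0.
pose s := [seq (y i, eps i) | i <- enum 'I_n].
apply: (indZ s [::] [::]) => //.
- by rewrite -map_comp (map_inj_uniq y_inj) enum_uniq.
- by move=> p /mapP [i _ ->]; apply: Zy.
- by rewrite /elem_prod big_map big_enum /= prod0 le0x.
Qed.

Definition subalgebra Q :=
  [/\ Q \bot, forall a b, Q a -> Q b -> Q (a `&` b) & forall a, Q a -> Q (~` a)].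

Section Subalgebra.
Variable Q : B -> Prop.
Hypothesis subQ : subalgebra Q.

Lemma subalgebra_join a b : Q a -> Q b -> Q (a `|` b).
Proof.
case: subQ => _ QI QC Qa Qb.
by rewrite -[a `|` b]complK complU; apply/QC/QI; apply: QC.
Qed.

Lemma subalgebra_joins (cs : seq B) : (forall c, c \in cs -> Q c) -> Q (\join_(c <- cs) c).
Proof.
case: subQ => Q0 _ _ csQ; rewrite big_seq.
by apply: big_ind => //; apply: subalgebra_join.
Qed.

Lemma subalgebra_elem_prod (s : seq (B * bool)) :
  (forall p, p \in s -> Q p.1) -> Q (elem_prod s).
Proof.
case: subQ => Q0 QI QC sQ; rewrite /elem_prod big_seq.
apply: big_ind => [||[b []] /sQ /= Qb] //; last exact: QC.
by rewrite -compl0; apply: QC.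
Qed.
End Subalgebra.

Lemma indep_modulo0 C D Q x : subalgebra Q ->
  (forall c, C c -> c <= x /\ Q c) -> (forall e, D e -> e <= ~` x) -> ~ Q x ->
  indep_modulo C D (fun _ => False).
Proof.
move=> subQ CxQ Dx nQx [|p s] cs es _ sZ csC esD; last by case: (sZ p (mem_head _ _)).
rewrite /elem_prod big_nil => top_le.
have jcs_le : \join_(c <- cs) c <= x by apply/joinsP_seq => c /csC /CxQ [].
have jes_le : \join_(e <- es) e <= ~` x by apply/joinsP_seq => e /esD /Dx.
have x_le : x <= \join_(c <- cs) c.
  rewrite -(@disjoint_lexUl _ _ (\join_(e <- es) e)); first exact: le_trans (lex1 x) top_le.
  by apply/eqP; rewrite disj_leC lexC.
apply: nQx; rewrite (@le_anti _ _ x (\join_(c <- cs) c)) ?x_le ?jcs_le //.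
by apply: (subalgebra_joins subQ) => c /csC /CxQ [].
Qed.

Lemma indep_modulo_join C D Z s cs es y : indep_modulo C D Z ->
  uniq (map fst s) -> (forall p, p \in s -> Z p.1) ->
  (forall c, c \in cs -> C c) -> (forall e, e \in es -> D e) -> C y \/ D y ->
  ~ elem_prod s <= (\join_(c <- cs) c `|` \join_(e <- es) e) `|` y.
Proof.
move=> indZ us sZ csC esD [Cy|Dy] le_y.
  apply: (indZ s (y :: cs) es) => // [c|]; first by rewrite inE => /orP [/eqP ->|/csC].
  by rewrite big_cons -joinA [y `|` _]joinC.
apply: (indZ s cs (y :: es)) => // [e|]; first by rewrite inE => /orP [/eqP ->|/esD].
by rewrite big_cons [y `|` _]joinC joinA.
Qed.

Lemma indep_modulo_extend C D Z Q x : subalgebra Q ->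
  (forall z, Z z -> Q z) -> (forall c, C c -> Q c) -> (forall e, D e -> Q e) ->
  (forall q, Q q -> q <= x -> exists2 c, C c & q <= c) ->
  (forall q, Q q -> q <= ~` x -> exists2 e, D e & q <= e) ->
  indep_modulo C D Z -> indep_modulo C D (fun z => Z z \/ z = x).
Proof.
move=> subQ ZQ CQ DQ C_cof D_cof indZ s cs es us sZx csC esD.
have [xs|xNs] := boolP (x \in map fst s); last first.
  apply: (indZ s cs es us) => // p ps; case: (sZx p ps) => // px.
  by move: xNs; rewrite -px map_f.
have [p ps px] := mapP xs; have s_perm := perm_to_rem ps; set s' := rem p s in s_perm.
move: us; rewrite (perm_uniq (perm_map fst s_perm)) /= => /andP [pNs' us'].
have s'Z q : q \in s' -> Z q.1.
  move=> qs'; have /sZx [//|qx] : q \in s by rewrite (perm_mem s_perm) inE qs' orbT.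
  by move: pNs'; rewrite -px -qx map_f.
pose J := \join_(c <- cs) c `|` \join_(e <- es) e.
have QJ : Q J.
  apply: (subalgebra_join subQ); apply: (subalgebra_joins subQ).
    by move=> c /csC /CQ.
  by move=> e /esD /DQ.
have Qu : Q (elem_prod s' `&` ~` J).
  have [_ QI QC] := subQ; apply: QI (QC _ QJ).
  by apply: (subalgebra_elem_prod subQ) => q /s'Z /ZQ.
move=> s_le; have u_le : elem_prod s' `&` ~` J <= ~` literal p.
  move: s_le; rewrite /elem_prod (perm_big _ s_perm) big_cons -/(elem_prod s') => s_le.
  by rewrite -disj_leC meetAC disj_leC complK meetC.
have [y CDy u_le_y] : exists2 y, C y \/ D y & elem_prod s' `&` ~` J <= y.
  move: u_le; rewrite /literal -px; case: p.2 => u_le.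
    by have [e De ue] := D_cof _ Qu u_le; exists e; [right|].
  by rewrite complK in u_le; have [c Cc uc] := C_cof _ Qu u_le; exists c; [left|].
by apply: (indep_modulo_join indZ us' s'Z csC esD CDy); rewrite -leBLR diffE.
Qed.

Lemma indep_modulo_bigcup C D (F : set (set B)) :
  total_on F subset -> (forall Z, F Z -> indep_modulo C D Z) ->
  indep_modulo C D (fun _ => False) -> indep_modulo C D (\bigcup_(Z in F) Z)%classic.
Proof.
move=> F_total F_indep indep0 [|p s] cs es us sF.
  by apply: indep0 => // q; rewrite in_nil.
have [Z FZ sZ] : exists2 Z, F Z & forall q, q \in p :: s -> Z q.1.
  elim: s p sF {us} => [|p' s IH] p sF.
    by have [Z FZ Zp] := sF p (mem_head _ _); exists Z => // q; rewrite inE => /eqP ->.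
  have [Z1 FZ1 Z1p] := sF p (mem_head _ _).
  have [|Z2 FZ2 Z2s] := IH p' => [q q_in|]; first by apply: sF; rewrite inE q_in orbT.
  have [Z12|Z21] := F_total Z1 Z2 FZ1 FZ2.
    by exists Z2 => // q; rewrite inE => /orP [/eqP ->|/Z2s]; [apply: Z12|].
  by exists Z1 => // q; rewrite inE => /orP [/eqP ->|/Z2s /Z21].
exact: (F_indep Z FZ).
Qed.

Lemma exists_maximal_indep_modulo C D (X : B -> Prop) :
  indep_modulo C D (fun _ => False) ->
  exists Z, [/\ forall z, Z z -> X z, indep_modulo C D Z &
    forall x, X x -> ~ Z x -> ~ indep_modulo C D (fun z => Z z \/ z = x)].
Proof.
move=> indep0; pose P (Z : set B) := (Z `<=` X)%classic /\ indep_modulo C D Z.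
have chainP F : (F `<=` P)%classic -> total_on F subset -> P (\bigcup_(Z in F) Z)%classic.
  move=> FP F_total; split; first by move=> z [Z /FP [ZX _] /ZX].
  by apply: indep_modulo_bigcup => // Z /FP [].
have [Z [[ZX indZ] Z_max]] := Zorn_bigcup chainP.
exists Z; split=> // x Xx nZx indZx; apply: (Z_max _ _ (conj _ indZx)).
  by split=> [z Zz|sub]; [left|apply/nZx/sub; right].
by move=> z [/ZX|->].
Qed.
End IndependenceModulo.

Section PowerClosed.
Variables K L : Type.
Hypothesis regK : regular_card K.
Hypothesis infL : infinite_card L.
Hypothesis powLK : pow_lt_eq L K.

Lemma card_le_prod (A A' : Type) : card_le A L -> card_le A' L -> card_le (A * A') L.
Proof.
move=> [g g_inj] [g' g'_inj]; apply: card_le_trans (powLK (infinite_card_gt_bool regK.1)).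
exists (fun p (t : bool) => if t then g p.1 else g' p.2) => [[a a'] [b b']] /= E.
by congr pair; [apply: g_inj; apply: (congr1 (fun h => h true) E)
               |apply: g'_inj; apply: (congr1 (fun h => h false) E)].
Qed.

Lemma card_le_option (A : Type) : card_le A L -> card_le (option A) L.
Proof.
move=> [g g_inj]; have [e e_inj] := infL.
apply: card_le_trans (card_le_prod (card_le_refl L) (card_le_refl L)).
exists (fun o => if o is Some a then (g a, e 0) else (e 0, e 1)) => [[a|] [a'|]] //=.
- by case=> /g_inj ->.
- by case=> _ /e_inj.
- by case=> _ /esym/e_inj.
Qed.

Lemma card_le_sigT (I : Type) (F : I -> Type) :
  card_le I L -> (forall i, card_le (F i) L) -> card_le {i : I & F i} L.
Proof.
move=> [h h_inj] FL; apply: card_le_trans (card_le_prod (card_le_refl L) (card_le_refl L)).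
pose g i := sval (cid (FL i)).
have g_inj i : injective (g i) by rewrite /g; case: cid.
exists (fun p => (h (projT1 p), g (projT1 p) (projT2 p))).
by move=> [i x] [i' x'] /= [/h_inj ii']; subst i' => /g_inj ->.
Qed.

Lemma card_le_bigcup (I T : Type) (P : I -> Prop) (Q : I -> T -> Prop) :
  card_le {i | P i} L -> (forall i, P i -> card_le {t | Q i t} L) ->
  card_le {t | exists i, P i /\ Q i t} L.
Proof.
move=> PL QL.
apply: (@card_le_image L {i : {i | P i} & {t | Q (sval i) t}} _ (fun w => sval (projT2 w))).
  by apply: card_le_sigT => // [[i Pi]]; apply: QL.
by move=> t [i [Pi Qit]]; exists (existT _ (exist _ i Pi) (exist _ t Qit)).
Qed.

Lemma card_le_setU (T : Type) (P Q : T -> Prop) :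
  card_le {t | P t} L -> card_le {t | Q t} L -> card_le {t | P t \/ Q t} L.
Proof.
move=> PL QL.
apply: card_le_trans (@card_le_bigcup bool T (fun _ => True) (fun i => if i then P else Q) _ _).
- by apply: card_le_subset => t [Pt|Qt]; [exists true|exists false].
- exact: card_le_trans (card_le_sub _) (infinite_card_le_bool infL).
- by case.
Qed.

Lemma card_le_set1 (T : Type) (a : T) : card_le {t | t = a} L.
Proof.
have [e _] := infL; exists (fun _ => e 0) => x y _.
by apply: sval_inj; rewrite (svalP x) (svalP y).
Qed.

Lemma card_le_K_L : card_le K L.
Proof.
apply: contrapT => nKL; apply: (@no_card_le_pred L).
have LK : card_lt L K by split=> //; case: (card_le_total L K) => // /nKL.
exact: card_le_trans (card_le_arrow L (infinite_card_le_bool infL)) (powLK LK).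
Qed.

Section SmallSubsets.
Variables (T : Type) (S : T -> Prop).

(* A subset of [S] of size < kappa is coded by a strict upper bound [m] of an injective
   image of it in [{k | in_kappa k}], together with the partial inverse of that injection. *)
Let code := {m : {m : K | in_kappa m} & ({j | wlt j (sval m)} -> option {x | S x})}.

Let decode (w : code) (x : T) := exists i, option_map sval (projT2 w i) = Some x.

Let card_le_code : card_le {x | S x} L -> card_le code L.
Proof.
move=> SL; apply: card_le_sigT => [|[m m_kappa]].
  exact: card_le_trans (card_le_sub _) card_le_K_L.
apply: card_le_trans (powLK (in_kappa_seg m_kappa)).
exact: card_le_arrow (card_le_option SL).
Qed.

Let decode_onto (C : T -> Prop) : card_lt {x | C x} K -> (forall x, C x -> S x) ->
  exists w, decode w = C.
Proof.
move=> CK CS; have [g g_inj] := CK.1; have [h h_inj] := card_le_in_kappa K.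
pose e c := sval (h (g c)).
have e_inj : injective e by move=> c c' /sval_inj /h_inj /g_inj.
have [m [m_kappa e_below]] := in_kappa_bound regK CK (fun c => svalP (h (g c))).
pose phi (i : {j | wlt j m}) := if pselect (exists c, e c = sval i) is left ex
  then Some (exist S (sval (sval (cid ex))) (CS _ (svalP (sval (cid ex))))) else None.
exists (existT _ (exist _ m m_kappa) phi); apply: funext => x; apply: propext; split.
  by move=> [i]; rewrite /= /phi; case: pselect => // ex; case: cid => c _ [<-]; apply: svalP.
move=> Cx; exists (exist _ (e (exist C x Cx)) (e_below _)); rewrite /= /phi.
case: pselect => [ex|]; last by case; exists (exist C x Cx).
by case: cid => c ec; rewrite /= (e_inj _ _ ec).
Qed.

Lemma card_le_small_subsets : card_le {x | S x} L ->
  card_le {C : T -> Prop | card_lt {x | C x} K /\ forall x, C x -> S x} L.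
Proof.
move=> SL; apply: card_le_image (card_le_code SL) _ => C [CK CS].
exact: decode_onto.
Qed.
End SmallSubsets.

Section Closure.
Variables (d : Order.disp_t) (B : ctbDistrLatticeType d).
Variable f : B -> B -> Prop.
Hypothesis f_small : forall a, card_lt {b | f a b} K.
Variable sel : (B -> Prop) -> (B -> Prop) -> B -> Prop.
Hypothesis sel_small : forall C D, card_le {z | sel C D z} L.

(* [sel] is only applied to sets of size < kappa lying in a single earlier stage; this
   is what keeps every stage of size at most lambda. *)
Inductive stage : K -> B -> Prop :=
| stage0 k : stage k \bot
| stageI k j a b : wlt j k -> stage j a -> stage j b -> stage k (a `&` b)
| stageC k j a : wlt j k -> stage j a -> stage k (~` a)
| stage_f k j a b : wlt j k -> stage j a -> f a b -> stage k b
| stage_sel k j C D b : wlt j k -> card_lt {c | C c} K -> card_lt {c | D c} K ->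
    (forall c, C c -> stage j c) -> (forall c, D c -> stage j c) -> sel C D b -> stage k b.

Lemma stage_mono j k b : wlt j k -> stage j b -> stage k b.
Proof.
move=> jk jb; case: jb jk => {j b} [j|j j' a b|j j' a|j j' a b|j j' C D b].
- by move=> _; apply: stage0.
- by move=> j'j ja jb /(wlt_trans j'j) j'k; apply: stageI j'k ja jb.
- by move=> j'j ja /(wlt_trans j'j) j'k; apply: stageC j'k ja.
- by move=> j'j ja fab /(wlt_trans j'j) j'k; apply: stage_f j'k ja fab.
- by move=> j'j CK DK Cj Dj selb /(wlt_trans j'j) j'k; apply: stage_sel j'k CK DK Cj Dj selb.
Qed.

Definition small_sub (j : K) (C : B -> Prop) :=
  card_lt {c | C c} K /\ forall c, C c -> stage j c.

Definition below k a := exists j, wlt j k /\ stage j a.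

Lemma stage_inv k b : stage k b ->
  b = \bot \/ (exists a, below k a /\ exists c, below k c /\ b = a `&` c) \/
  (exists a, below k a /\ b = ~` a) \/ (exists a, below k a /\ f a b) \/
  (exists j, wlt j k /\ exists C, small_sub j C /\ exists D, small_sub j D /\ sel C D b).
Proof.
case=> {k b} [k|k j a b jk ja jb|k j a jk ja|k j a b jk ja fab|k j C D b jk CK DK Cj Dj selb].
- by left.
- by right; left; exists a; split; [exists j|exists b; split; [exists j|]].
- by right; right; left; exists a; split; [exists j|].
- by right; right; right; left; exists a; split; [exists j|].
- by right; right; right; right; exists j; split=> //; exists C; split=> //; exists D.
Qed.

Lemma card_le_stage k : in_kappa k -> card_le {b | stage k b} L.
Proof.
elim/wlt_ind: k => k IH k_kappa.
have stageL j : wlt j k -> card_le {b | stage j b} L.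
  by move=> jk; apply: IH jk (in_kappa_wlt k_kappa jk).
have segL : card_le {j | wlt j k} L := card_le_trans (card_le_sub _) card_le_K_L.
have belowL : card_le {a | below k a} L := card_le_bigcup segL stageL.
apply: card_le_trans (card_le_subset (@stage_inv k)) _.
repeat apply: card_le_setU.
- exact: card_le_set1.
- apply: (card_le_bigcup belowL) => a _.
  by apply: (card_le_bigcup belowL) => c _; apply: card_le_set1.
- by apply: (card_le_bigcup belowL) => a _; apply: card_le_set1.
- by apply: (card_le_bigcup belowL) => a _; apply: card_le_trans (f_small a).1 card_le_K_L.
apply: (card_le_bigcup segL) => j /stageL /card_le_small_subsets subL.
by apply: (card_le_bigcup subL) => C _; apply: (card_le_bigcup subL) => D _.
Qed.

Definition hull b := exists k, in_kappa k /\ stage k b.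

Lemma card_le_hull : card_le {b | hull b} L.
Proof.
apply: card_le_bigcup => [|k /card_le_stage //].
exact: card_le_trans (card_le_sub _) card_le_K_L.
Qed.

Lemma hull_stage_bound (C : B -> Prop) : card_lt {c | C c} K ->
  (forall c, C c -> hull c) -> exists m, in_kappa m /\ forall c, C c -> stage m c.
Proof.
move=> CK CA; pose k (c : {c | C c}) := sval (cid (CA _ (svalP c))).
have k_spec c : in_kappa (k c) /\ stage (k c) (sval c) by rewrite /k; case: cid.
have [m [mk m_above]] := in_kappa_bound regK CK (fun c => (k_spec c).1).
by exists m; split=> // c Cc; apply: stage_mono (m_above (exist C c Cc)) (k_spec _).2.
Qed.

Lemma hull_subalgebra : subalgebra hull.
Proof.
split.
- have [e _] := regK.1; have [h _] := card_le_in_kappa K.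
  by exists (sval (h (e 0))); split; [apply: svalP|apply: stage0].
- move=> a b [k1 [k1k ak1]] [k2 [k2k bk2]].
  have [m [mk k1m k2m]] := in_kappa_above2 regK k1k k2k.
  have [m' [m'k mm' _]] := in_kappa_above2 regK mk mk.
  by exists m'; split=> //; apply: stageI mm' (stage_mono k1m ak1) (stage_mono k2m bk2).
- move=> a [k [kk ak]]; have [m [mk km _]] := in_kappa_above2 regK kk kk.
  by exists m; split=> //; apply: stageC km ak.
Qed.

Lemma hull_f a b : hull a -> f a b -> hull b.
Proof.
move=> [k [kk ak]] fab; have [m [mk km _]] := in_kappa_above2 regK kk kk.
by exists m; split=> //; apply: stage_f km ak fab.
Qed.

Lemma hull_sel (C D : B -> Prop) b : card_lt {c | C c} K -> card_lt {c | D c} K ->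
  (forall c, C c -> hull c) -> (forall c, D c -> hull c) -> sel C D b -> hull b.
Proof.
move=> CK DK CA DA selb.
have [m1 [m1k Cm1]] := hull_stage_bound CK CA.
have [m2 [m2k Dm2]] := hull_stage_bound DK DA.
have [m [mk m1m m2m]] := in_kappa_above2 regK m1k m2k.
have [m' [m'k mm' _]] := in_kappa_above2 regK mk mk.
exists m'; split=> //; apply: stage_sel mm' CK DK _ _ selb => c.
  by move/Cm1; apply: stage_mono.
by move/Dm2; apply: stage_mono.
Qed.
End Closure.

End PowerClosed.

Section IndependentSubsetsSmall.
Variables (K L : Type) (d : Order.disp_t) (B : ctbDistrLatticeType d).
Hypothesis regK : regular_card K.
Hypothesis infL : infinite_card L.
Hypothesis powLK : pow_lt_eq L K.
Variable f : B -> B -> Prop.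
Hypothesis f_small : forall a, card_lt {b | f a b} K.
Hypothesis f_FN : forall a b : B, a <= b -> exists c, [/\ f a c, f b c, a <= c & c <= b].
Variable X : B -> Prop.
Hypothesis indep_small :
  forall Y, (forall y, Y y -> X y) -> independent Y -> card_le {y | Y y} L.

Definition max_indep C D : B -> Prop :=
  if pselect (indep_modulo C D (fun _ => False)) is left indep0
  then sval (cid (exists_maximal_indep_modulo X indep0)) else fun _ => False.

Lemma max_indep_spec C D : indep_modulo C D (fun _ => False) ->
  let Z := max_indep C D in [/\ forall z, Z z -> X z, indep_modulo C D Z &
    forall x, X x -> ~ Z x -> ~ indep_modulo C D (fun z => Z z \/ z = x)].
Proof. by rewrite /max_indep; case: pselect => // indep0 _; case: cid. Qed.

Lemma card_le_max_indep C D : card_le {z | max_indep C D z} L.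
Proof.
have [indep0|nindep0] := pselect (indep_modulo C D (fun _ => False)).
  have [ZX indZ _] := max_indep_spec indep0.
  exact: indep_small ZX (indep_modulo_independent indZ).
by apply: card_le_empty => z; rewrite /max_indep; case: pselect => [/[dup] /nindep0 []|_ []].
Qed.

Let A := hull K f max_indep.

Lemma X_sub_hull x : X x -> A x.
Proof.
move=> Xx; apply: contrapT => nAx.
pose C c := [/\ f x c, A c & c <= x]; pose D c := [/\ f (~` x) c, A c & c <= ~` x].
have CK : card_lt {c | C c} K.
  by apply: card_le_lt_trans (f_small x); apply: card_le_subset => c [].
have DK : card_lt {c | D c} K.
  by apply: card_le_lt_trans (f_small (~` x)); apply: card_le_subset => c [].
have subA := hull_subalgebra regK f max_indep.
have indep0 : indep_modulo C D (fun _ => False).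
  by apply: (indep_modulo0 (x := x) subA) => [c [_ Ac cx]|e []|].
have [ZX indZ Z_max] := max_indep_spec indep0.
have ZA z : max_indep C D z -> A z.
  by move=> Zz; apply: (hull_sel regK CK DK _ _ Zz) => [c []|e []].
apply: (Z_max x Xx (fun Zx => nAx (ZA x Zx))).
apply: (indep_modulo_extend subA ZA _ _ _ _ indZ) => [c []|e []|q Aq qx|q Aq qx] //.
all: have [c [fqc fxc qc cx]] := f_FN qx.
all: by exists c => //; split=> //; apply: hull_f fqc.
Qed.

Lemma card_le_X : card_le {x | X x} L.
Proof.
exact: card_le_trans (card_le_subset X_sub_hull)
  (card_le_hull regK infL powLK f_small card_le_max_indep).
Qed.
End IndependentSubsetsSmall.

Theorem theorem4p2 (K : Type) (d : Order.disp_t) (B : ctbDistrLatticeType d)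
  (L : Type) (X : B -> Prop) :
  regular_card K -> kappa_FN K B ->
  infinite_card L -> pow_lt_eq L K ->
  card_lt L {x : B | X x} ->
  exists Y : B -> Prop,
    (forall y, Y y -> X y) /\ independent Y /\ card_lt L {y : B | Y y}.
Proof.
move=> regK [f [f_small f_FN]] infL powLK [_ nXL]; apply: contrapT => no_large.
apply: nXL; apply: (card_le_X regK infL powLK f_small).
- by move=> a b /f_FN [c [? [? []]]]; exists c.
- move=> Y YX indY; apply: card_le_of_not_lt => YL.
  by apply: no_large; exists Y.
Qed.
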